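(* Let $G$ be a regular bipartite Tanner graph with girth $g$ and smallest left (variable-node) degree $d$. Then the minimum pseudocodeword weights of $G$ on the BSC and on the AWGN channel, $w^{BSC}_{\min}$ and $w^{AWGN}_{\min}$, each satisfy \[ w_{\min} \ge \begin{cases} 1+d+d(d-1)+\cdots+d(d-1)^{\frac{g-6}{4}}, & \frac{g}{2}\text{ odd},\\ 1+d+d(d-1)+\cdots+d(d-1)^{\frac{g-8}{4}}+(d-1)^{\frac{g-4}{4}}, & \frac{g}{2}\text{ even}.\end{cases}\]
   Context: A Tanner graph $G$ is a finite bipartite graph with variable (left) nodes $v_1,\dots,v_n$ and check (right) nodes $u_1,\dots,u_m$; it defines the binary code $\mathcal{C}$ of all $x\in\{0,1\}^n$ such that every check node has an even number of neighbours $v_i$ with $x_i=1$. A degree-$\ell$ lift (cover) $\hat G$ of $G$ replaces each node $x$ of $G$ by a cloud of $\ell$ copies, and for each edge $(x,y)$ of $G$ places $\ell$ edges between the clouds of $x$ and $y$ forming a perfect matching; $\hat G$ is again a Tanner graph. A (lift-realizable) pseudocodeword of $G$ is a vector $p=(p_1,\dots,p_n)$ of nonnegative integers obtained from a codeword of the code of some finite-degree lift $\hat G$ by letting $p_i$ be the number of copies of $v_i$ assigned value 1. For a nonzero pseudocodeword $p$, let $e$ be the smallest number such that the sum of the $e$ largest $p_i$ is at least $\frac12\sum_i p_i$; then $w^{BSC}(p)=2e$ if this sum equals $\frac12\sum_ip_i$ and $w^{BSC}(p)=2e-1$ if it is strictly larger; and $w^{AWGN}(p)=(\sum_i p_i)^2/\sum_i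 p_i^2$. $w^{BSC}_{\min}$ (resp. $w^{AWGN}_{\min}$) is the minimum of $w^{BSC}(p)$ (resp. $w^{AWGN}(p)$) over all nonzero lift-realizable pseudocodewords $p$ of $G$. *)

From HB Require Import structures.
From mathcomp Require Import all_boot all_order all_fingroup all_algebra.
Set Implicit Arguments. Unset Strict Implicit. Unset Printing Implicit Defensive.
Import GRing.Theory Num.Theory.

(* A Tanner graph with n variable nodes 'I_n and m check nodes 'I_m is given by
   its edge relation H : check -> variable -> bool (H j i = edge between u_j and v_i). *)

Definition tanner_adj (n m : nat) (H : 'I_m -> 'I_n -> bool) : rel ('I_n + 'I_m) :=
  fun x y => match x, y with
             | inl i, inr j => H j i
             | inr j, inl i => H j i
             | _, _ => false
             end.

Definition has_cycle_of_length (n m : nat) (H : 'I_m -> 'I_n -> bool) (k : nat) : Prop :=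
  exists s : seq ('I_n + 'I_m),
    [/\ size s = k, 3 <= k, uniq s & path.cycle (tanner_adj H) s].

Definition girth_is (n m : nat) (H : 'I_m -> 'I_n -> bool) (g : nat) : Prop :=
  has_cycle_of_length H g /\ (forall k, k < g -> ~ has_cycle_of_length H k).

Definition var_deg (n m : nat) (H : 'I_m -> 'I_n -> bool) (i : 'I_n) : nat :=
  #|[set j | H j i]|.
Definition chk_deg (n m : nat) (H : 'I_m -> 'I_n -> bool) (j : 'I_m) : nat :=
  #|[set i | H j i]|.

Definition regular_tanner (n m : nat) (H : 'I_m -> 'I_n -> bool) : Prop :=
  exists dv dc : nat, (forall i, var_deg H i = dv) /\ (forall j, chk_deg H j = dc).

Definition smallest_left_degree (n m : nat) (H : 'I_m -> 'I_n -> bool) (d : nat) : Prop :=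
  (exists i, var_deg H i = d) /\ (forall i, d <= var_deg H i).

(* Degree-l lift: each edge (u_j, v_i) is replaced by the perfect matching
   (v_i, a) -- (u_j, pi j i a) between the clouds (only the values of pi on edges matter).
   x : assignment of the copies of the variable nodes. *)
Definition lift_codeword (n m l : nat) (H : 'I_m -> 'I_n -> bool)
  (pi : 'I_m -> 'I_n -> {perm 'I_l}) (x : 'I_n -> 'I_l -> bool) : Prop :=
  forall (j : 'I_m) (b : 'I_l),
    ~~ odd #|[set ia : 'I_n * 'I_l | [&& H j ia.1, pi j ia.1 ia.2 == b & x ia.1 ia.2]]|.

Definition pseudocodeword (n m : nat) (H : 'I_m -> 'I_n -> bool) (p : 'I_n -> nat) : Prop :=
  exists (l : nat) (pi : 'I_m -> 'I_n -> {perm 'I_l}) (x : 'I_n -> 'I_l -> bool),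
    lift_codeword H pi x /\ forall i, p i = #|[set a | x i a]|.

Definition psum (n : nat) (p : 'I_n -> nat) : nat := \sum_(i < n) p i.

Definition sum_largest (n : nat) (p : 'I_n -> nat) (e : nat) : nat :=
  \max_(S : {set 'I_n} | #|S| == e) \sum_(i in S) p i.

Definition bsc_e (n : nat) (p : 'I_n -> nat) : nat :=
  find (fun e => psum p <= 2 * sum_largest p e) (iota 0 n.+1).

Definition w_BSC (n : nat) (p : 'I_n -> nat) : nat :=
  let e := bsc_e p in
  if 2 * sum_largest p e == psum p then 2 * e else (2 * e).-1.

Definition w_AWGN (n : nat) (p : 'I_n -> nat) : rat :=
  ((psum p ^ 2)%:R / (\sum_(i < n) p i ^ 2)%:R)%R.

Definition girth_bound (d g : nat) : nat :=
  if odd g./2 then 1 + \sum_(k < (g - 2) %/ 4) d * (d - 1) ^ k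
  else 1 + \sum_(k < (g - 4) %/ 4) d * (d - 1) ^ k + (d - 1) ^ ((g - 4) %/ 4).

(* Pseudocodewords lie in the fundamental cone: at a check, the value of a variable is at
   most the sum of the values of the other neighbours, since every copy of a variable set
   to 1 in the lift needs a second 1-neighbour at its copy of the check.  Root the Tanner
   graph at a variable v0 of largest value p_max and follow non-backtracking walks: by the
   cone inequality the values at the ends of the walks of length 2(k+1) add up to at least
   d (d-1)^k p_max.  Two distinct such walks of total length below the girth cannot end at
   the same variable, since together they would close a cycle, so the sum of all values is
   at least girth_bound d g * p_max; both weights are bounded below by sum p / p_max.  When
   g/2 is even there is room for one more layer, along a single check neighbour of v0. *)

From mathcomp Require Import all_boot all_order all_fingroup all_algebra zify.
Set Implicit Arguments. Unset Strict Implicit. Unset Printing Implicit Defensive.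
Import GRing.Theory Num.Theory.

Section NonBacktracking.
Variable T : eqType.

Fixpoint nonbacktracking (s : seq T) : bool :=
  if s is x :: t then (if t is _ :: z :: _ then x != z else true) && nonbacktracking t
  else true.

Lemma nonbacktracking_catl (s1 s2 : seq T) :
  nonbacktracking (s1 ++ s2) -> nonbacktracking s1.
Proof.
elim: s1 => //= x s1 IH /andP[Hx /IH ->]; rewrite andbT.
by case: s1 Hx {IH} => [|y [|z s1]].
Qed.

Lemma nonbacktracking_rcons3 (s : seq T) a b c :
  nonbacktracking (rcons (rcons (rcons s a) b) c) =
  nonbacktracking (rcons (rcons s a) b) && (a != c).
Proof.
elim: s => [|x s IH] /=; first by rewrite andbT.
by rewrite IH andbA; case: s {IH} => [|y [|z s]].
Qed.

Lemma nonbacktracking_rev (s : seq T) : nonbacktracking (rev s) = nonbacktracking s.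
Proof.
elim: s => [|x [|y [|z s]] IH] //.
by rewrite /= !rev_cons nonbacktracking_rcons3 -!rev_cons IH /= andbC eq_sym.
Qed.

Lemma nonbacktracking_rcons2 x (s : seq T) a b :
  nonbacktracking (x :: rcons (rcons s a) b) =
  nonbacktracking (x :: rcons s a) && (last x s != b).
Proof.
case/lastP: s => [|s y]; first by rewrite /= andbT.
by rewrite -!rcons_cons nonbacktracking_rcons3 last_rcons.
Qed.

Lemma nonbacktracking_cat_cons (s1 s2 : seq T) y x :
  nonbacktracking (rcons s1 y) -> nonbacktracking (y :: s2) ->
  (s1 != [::] -> s2 != [::] -> last x s1 != head x s2) ->
  nonbacktracking (s1 ++ y :: s2).
Proof.
elim: s1 => [|u s1 IH] //= /andP[Hu Hs1] Hs2 Hjoin; apply/andP; split; last first.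
  apply: IH => // s1_nil s2_nil; have := Hjoin isT s2_nil.
  by case: s1 s1_nil {Hjoin Hs1 Hu}.
case: s1 {IH} Hu Hs1 Hjoin => [|v [|w s1]] //= _ _ Hjoin.
by case: s2 Hs2 Hjoin => [|z s2] //= _ /(_ isT isT).
Qed.

End NonBacktracking.

Definition has_cycle (T : eqType) (e : rel T) (k : nat) : Prop :=
  exists c : seq T, [/\ size c = k, 3 <= k, uniq c & path.cycle e c].

Section Cycles.
Variables (T : eqType) (e : rel T).
Hypotheses (e_sym : symmetric e) (e_irr : irreflexive e).

Lemma nonbacktracking_repeat_cycle x s :
  path e x s -> nonbacktracking (x :: s) -> ~~ uniq (x :: s) ->
  exists2 k, k <= size s & has_cycle e k.
Proof.
have [N] := ubnP (size s); elim: N x s => // N IH x s /ltnSE le_sN px nb.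
rewrite cons_uniq negb_and negbK => /orP[xs | /negP nus]; last first.
  case: s le_sN px nb nus => [|y s] //= le_sN /andP[_ py] /andP[_ nb] /negP nus.
  by have [k le_ks cyc] := IH y s le_sN py nb nus; exists k; first exact: leqW.
case/splitPr: xs le_sN px nb => b r le_sN; rewrite cat_path /= => /and3P[pb eb _] nb.
have nbb : nonbacktracking (x :: b) by apply: (@nonbacktracking_catl _ _ (x :: r)).
have le_bs : size b < size (b ++ x :: r) by rewrite size_cat /= addnS ltnS leq_addr.
have [ub | nub] := boolP (uniq (x :: b)); last first.
  have [k le_kb cyc] := IH x b (leq_trans le_bs le_sN) pb nbb nub.
  by exists k => //; apply: leq_trans le_kb (ltnW le_bs).
case: b pb eb nb nbb ub le_bs {le_sN} => [|y [|z b]] pb eb nb _ ub le_bs.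
- by rewrite /= e_irr in eb.
- by move: nb => /= /andP[]; rewrite eqxx.
exists (size [:: x, y, z & b]) => //; exists [:: x, y, z & b]; split => //.
by rewrite /path.cycle rcons_path pb eb.
Qed.

Lemma nonbacktracking_walks_cycle x s1 s2 :
  path e x s1 -> path e x s2 ->
  nonbacktracking (x :: s1) -> nonbacktracking (x :: s2) ->
  last x s1 = last x s2 -> s1 != s2 ->
  exists2 k, k <= size s1 + size s2 & has_cycle e k.
Proof.
have [N] := ubnP (size s1 + size s2); elim: N s1 s2 => // N IH s1 s2.
case/lastP: s1 => [|q1 y1]; case/lastP: s2 => [|q2 y2] // leN p1 p2 n1 n2.
- rewrite last_rcons /= => Ex _; have [|k le_k cyc] := nonbacktracking_repeat_cycle p2 n2.
    by rewrite /= {1}Ex mem_rcons mem_head.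
  by exists k; rewrite // add0n.
- rewrite last_rcons /= => Ex _; have [|k le_k cyc] := nonbacktracking_repeat_cycle p1 n1.
    by rewrite /= -{1}Ex mem_rcons mem_head.
  by exists k; rewrite // addn0.
rewrite !last_rcons => Ey; subst y2 => ne12.
move: p1 p2 n1 n2; rewrite !rcons_path -!rcons_cons.
move=> /andP[p1 e1] /andP[p2 e2] n1 n2.
have n1' : nonbacktracking (x :: q1) by move: n1; rewrite -cats1 => /nonbacktracking_catl.
have n2' : nonbacktracking (x :: q2) by move: n2; rewrite -cats1 => /nonbacktracking_catl.
have [eq_last | ne_last] := eqVneq (last x q1) (last x q2).
  have lt_q : size q1 + size q2 < N by move: leN; rewrite !size_rcons; lia.
  have ne_q : q1 != q2 by apply: contraNneq ne12 => ->.
  have [k le_k cyc] := IH q1 q2 lt_q p1 p2 n1' n2' eq_last ne_q.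
  by exists k => //; rewrite !size_rcons; lia.
have p2r : path e y1 (rev (x :: q2)).
  have := rev_path e x (rcons q2 y1).
  by rewrite last_rcons belast_rcons (eq_path (fun a b => e_sym b a)) rcons_path p2 e2.
set s := (x :: q1) ++ y1 :: rev (x :: q2).
have ps : path e x (behead s) by rewrite /= cat_path p1 /= e1.
have ns : nonbacktracking s.
  apply: (nonbacktracking_cat_cons (x := x)) => //.
    by rewrite -rev_rcons nonbacktracking_rev.
  by move=> _ _; rewrite (lastI x q2) rev_rcons.
have [|k le_k cyc] := nonbacktracking_repeat_cycle ps ns.
  by rewrite /= mem_cat inE mem_rev mem_head !orbT.
exists k => //; apply: leq_trans le_k _.
by rewrite size_cat /= size_rev !size_rcons addnS.
Qed.

End Cycles.

Section TannerGraph.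
Variables (n m : nat) (H : 'I_m -> 'I_n -> bool).
Local Notation vertex := ('I_n + 'I_m)%type.

Lemma tanner_adj_sym : symmetric (tanner_adj H).
Proof. by case=> [i|j] [i'|j']. Qed.

Lemma tanner_adj_irr : irreflexive (tanner_adj H).
Proof. by case. Qed.

Definition girth_gt (K : nat) : Prop := forall k, k <= K -> ~ has_cycle_of_length H k.

Definition fundamental_cone (p : 'I_n -> nat) : Prop :=
  forall j i, H j i -> p i <= \sum_(i' | H j i' && (i' != i)) p i'.

Lemma lift_codeword_partner l (pi : 'I_m -> 'I_n -> {perm 'I_l}) x j i a :
  lift_codeword H pi x -> H j i -> x i a ->
  exists ia : 'I_n * 'I_l, [&& H j ia.1, ia.1 != i, x ia.1 ia.2 & pi j ia.1 ia.2 == pi j i a].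
Proof.
move=> cw Hji xia.
case: (pickP (fun ia : 'I_n * 'I_l =>
  [&& H j ia.1, ia.1 != i, x ia.1 ia.2 & pi j ia.1 ia.2 == pi j i a])) => [ia partner | none].
  by exists ia.
have := cw j (pi j i a).
suff -> : [set ia : 'I_n * 'I_l | [&& H j ia.1, pi j ia.1 ia.2 == pi j i a & x ia.1 ia.2]]
          = [set (i, a)] by rewrite cards1.
apply/setP => [[i' a']]; rewrite !inE /=; apply/idP/idP; last first.
  by case/eqP => -> ->; rewrite Hji eqxx xia.
case/and3P => Hi' /eqP e xi'; have := none (i', a'); rewrite /= Hi' xi' e eqxx andbT.
by case: eqVneq => [Ei _ | //]; subst i'; move/perm_inj: e => ->.
Qed.

Lemma pseudocodeword_fundamental_cone p : pseudocodeword H p -> fundamental_cone p.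
Proof.
case=> l [pi [x [cw Hp]]] j i Hji.
set B := [set ia : 'I_n * 'I_l | [&& H j ia.1, ia.1 != i & x ia.1 ia.2]].
have card_B : #|B| = \sum_(i' | H j i' && (i' != i)) p i'.
  rewrite -sum1_card (eq_bigl (fun ia => (H j ia.1 && (ia.1 != i)) && x ia.1 ia.2)).
    rewrite -(pair_big_dep (fun i' => H j i' && (i' != i)) (fun i' a => x i' a) (fun _ _ => 1)).
    by apply: eq_bigr => i' _; rewrite Hp -sum1_card; apply: eq_bigl => a; rewrite inE.
  by move=> ia; rewrite inE andbA.
pose partner a := [pick ia | [&& H j ia.1, ia.1 != i, x ia.1 ia.2 & pi j ia.1 ia.2 == pi j i a]].
pose f a := odflt (i, a) (partner a).
have fP a : x i a -> f a \in B /\ pi j (f a).1 (f a).2 = pi j i a.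
  move=> xia; rewrite /f /partner; case: pickP => [ia /and4P[Hia ne_ia xia' /eqP e] | none].
    by rewrite inE Hia ne_ia xia'.
  have [ia] := lift_codeword_partner cw Hji xia.
  by rewrite none.
have f_inj : {in [set a | x i a] &, injective f}.
  move=> a1 a2; rewrite !inE => x1 x2 e12.
  have [_ e1] := fP a1 x1; have [_ e2] := fP a2 x2.
  by apply: (@perm_inj _ (pi j i)); rewrite -e1 -e2 e12.
rewrite -card_B Hp -(card_in_imset f_inj); apply: subset_leq_card.
by apply/subsetP => z /imsetP [a]; rewrite inE => xia ->; have [] := fP a xia.
Qed.

Lemma regular_cycle_var_deg_gt0 k : regular_tanner H -> has_cycle_of_length H k ->
  forall i, 0 < var_deg H i.
Proof.
case=> dv [_ [deg_v _]] [[|a [|b c]] [/= <- _ _ cyc]] // i; rewrite deg_v.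
move: cyc; rewrite /path.cycle /= => /andP[ab _].
have pos_deg i' j' : H j' i' -> 0 < var_deg H i'.
  by move=> Hj'i'; rewrite card_gt0; apply/set0Pn; exists j'; rewrite inE.
case: a b ab => [ia|ja] [ib|jb] //= ab.
  by rewrite -(deg_v ia); apply: pos_deg ab.
by rewrite -(deg_v ib); apply: pos_deg ab.
Qed.

Section Walks.
Variable v0 : 'I_n.

Definition extend_walk (w : seq vertex) (cv : 'I_m * 'I_n) : seq vertex :=
  rcons (rcons w (inr cv.1)) (inl cv.2).

Definition admissible_step (A : pred 'I_m) (w : seq vertex) (cv : 'I_m * 'I_n) : bool :=
  [&& (w == [::]) ==> A cv.1, path (tanner_adj H) (inl v0) (extend_walk w cv)
    & nonbacktracking (inl v0 :: extend_walk w cv)].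

(* The walks are stored without their initial vertex [inl v0]. *)
Fixpoint nb_walks (A : pred 'I_m) (k : nat) : seq (seq vertex) :=
  if k is k'.+1 then
    [seq extend_walk w cv | w <- nb_walks A k',
                            cv <- [seq cv <- index_enum _ | admissible_step A w cv]]
  else [:: [::]].

Lemma nb_walksS A k : nb_walks A k.+1 =
  [seq extend_walk w cv | w <- nb_walks A k,
                          cv <- [seq cv <- index_enum _ | admissible_step A w cv]].
Proof. by []. Qed.

Lemma mem_nb_walks A k w : w \in nb_walks A k ->
  [/\ path (tanner_adj H) (inl v0) w, nonbacktracking (inl v0 :: w) & size w = 2 * k].
Proof.
elim: k w => [|k IH] w /=; first by rewrite inE => /eqP ->.
case/allpairsPdep => w' [cv [/IH [_ _ size_w']]].
rewrite mem_filter => /andP[/and3P[_ pw nw] _] ->.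
by split => //; rewrite /extend_walk !size_rcons size_w'; lia.
Qed.

Lemma nb_walks_head A k w : w \in nb_walks A k.+1 -> exists c w', A c /\ w = inr c :: w'.
Proof.
elim: k w => [|k IH] w; case/allpairsPdep => w' [cv [w'_in cv_in ->]].
  move: w'_in cv_in; rewrite inE mem_filter => /eqP -> /andP[/and3P[Ac _ _] _].
  by exists cv.1, [:: inl cv.2].
have [c [w'' [Ac ->]]] := IH _ w'_in.
by exists c, (rcons (rcons w'' (inr cv.1)) (inl cv.2)).
Qed.

Lemma nb_walks_uniq A k : uniq (nb_walks A k).
Proof.
elim: k => [|k IH] //=; apply: allpairs_uniq_dep => //.
  by move=> w _; rewrite filter_uniq // index_enum_uniq.
move=> [w1 [c1 v1]] [w2 [c2 v2]] _ _ /=.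
by rewrite /extend_walk => /rcons_inj [/rcons_inj [-> [->]] [->]].
Qed.

Lemma admissible_step_nil A cv : admissible_step A [::] cv =
  (A cv.1 && H cv.1 v0) && (H cv.1 cv.2 && (cv.2 != v0)).
Proof.
case: cv => c v; rewrite /admissible_step /extend_walk /=.
by rewrite (inj_eq (@inl_inj _ _)) eq_sym !andbT !andbA.
Qed.

Lemma admissible_step_edge A w c v : admissible_step A w (c, v) -> H c v.
Proof.
by rewrite /admissible_step /extend_walk !rcons_path last_rcons => /and3P[_ /andP[_]].
Qed.

Lemma admissible_step_ext A w c0 u cv : admissible_step A w (c0, u) ->
  admissible_step A (extend_walk w (c0, u)) cv =
  (H cv.1 u && (cv.1 != c0)) && (H cv.1 cv.2 && (cv.2 != u)).
Proof.
case: cv => c v; rewrite /admissible_step /extend_walk => /and3P[_ pw nw].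
rewrite !rcons_path !last_rcons in pw *; rewrite pw.
rewrite !(nonbacktracking_rcons2, last_rcons) in nw *; rewrite nw /=.
rewrite (inj_eq (@inl_inj _ _)) (inj_eq (@inr_inj _ _)) (eq_sym c0) (eq_sym u).
by case: w {pw nw} => [|? ?] /=; case: (H c u); case: (H c v); case: (c != c0).
Qed.

Lemma nb_walks_last_inj A B k1 k2 K w1 w2 : girth_gt K ->
  w1 \in nb_walks A k1 -> w2 \in nb_walks B k2 -> 2 * k1 + 2 * k2 <= K ->
  last (inl v0) w1 = last (inl v0) w2 -> w1 = w2.
Proof.
move=> no_cycle w1_in w2_in le_K eq_last; case: (eqVneq w1 w2) => // ne12.
have [p1 n1 size1] := mem_nb_walks w1_in; have [p2 n2 size2] := mem_nb_walks w2_in.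
have [k le_k cyc] :=
  nonbacktracking_walks_cycle tanner_adj_sym tanner_adj_irr p1 p2 n1 n2 eq_last ne12.
by case: (no_cycle k _ cyc); rewrite -size1 -size2 in le_K; apply: leq_trans le_K.
Qed.

(* Two walks through the same first check [c] close a cycle of length at most
   [4 k + 2] instead of [4 k + 4]. *)
Lemma nb_walks_through_last_inj c k K w1 w2 : girth_gt K ->
  w1 \in nb_walks (pred1 c) k.+1 -> w2 \in nb_walks (pred1 c) k.+1 -> 4 * k + 2 <= K ->
  last (inl v0) w1 = last (inl v0) w2 -> w1 = w2.
Proof.
move=> no_cycle w1_in w2_in le_K eq_last; case: (eqVneq w1 w2) => // ne12.
have [p1 n1 size1] := mem_nb_walks w1_in; have [p2 n2 size2] := mem_nb_walks w2_in.
have [c1 [w1' [/eqP E1 E1w]]] := nb_walks_head w1_in.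
have [c2 [w2' [/eqP E2 E2w]]] := nb_walks_head w2_in.
subst w1 w2 c1 c2; move: p1 p2 n1 n2 => /andP[_ p1] /andP[_ p2] /andP[_ n1] /andP[_ n2].
have ne12' : w1' != w2' by apply: contraNneq ne12 => ->.
have [k' le_k' cyc] :=
  nonbacktracking_walks_cycle tanner_adj_sym tanner_adj_irr p1 p2 n1 n2 eq_last ne12'.
case: (no_cycle k' _ cyc); apply: leq_trans le_k' (leq_trans _ le_K).
by move: size1 size2 => /= [->] [->]; lia.
Qed.

Fixpoint nb_walks_upto (t : nat) : seq (seq vertex) :=
  if t is t'.+1 then nb_walks_upto t' ++ nb_walks predT t' else [::].

Lemma mem_nb_walks_upto t w :
  w \in nb_walks_upto t -> exists2 j, j < t & w \in nb_walks predT j.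
Proof.
elim: t => [|t IH] //=; rewrite mem_cat => /orP[/IH [j lt_jt w_in]|w_in].
  by exists j => //; apply: ltnW.
by exists t.
Qed.

Lemma nb_walks_upto_uniq t : uniq (nb_walks_upto t).
Proof.
elim: t => [|t IH] //=; rewrite cat_uniq IH nb_walks_uniq andbT /=.
apply/hasPn => w w_in; apply/negP => /mem_nb_walks_upto [j lt_jt w_in'].
have [_ _ size1] := mem_nb_walks w_in; have [_ _ size2] := mem_nb_walks w_in'.
by move: lt_jt; rewrite size1 in size2; lia.
Qed.

Lemma big_nb_walks_upto t (F : seq vertex -> nat) :
  \sum_(w <- nb_walks_upto t) F w = \sum_(j < t) \sum_(w <- nb_walks predT j) F w.
Proof. by elim: t => [|t IH]; rewrite ?big_ord0 ?big_nil //= big_cat IH big_ord_recr. Qed.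

Section Mass.
Variables (p : 'I_n -> nat) (d : nat).
Hypotheses (p_cone : fundamental_cone p) (d_le_deg : forall i, d <= var_deg H i).

Definition vweight (z : vertex) : nat := if z is inl i then p i else 0.

Definition walk_mass (A : pred 'I_m) (k : nat) : nat :=
  \sum_(w <- nb_walks A k) vweight (last (inl v0) w).

Lemma cone_sum_checks (C : pred 'I_m) u : (forall c, C c -> H c u) ->
  #|[set c | C c]| * p u <= \sum_(cv | C cv.1 && (H cv.1 cv.2 && (cv.2 != u))) p cv.2.
Proof.
move=> CH; rewrite -(pair_big_dep C (fun c v => H c v && (v != u)) (fun _ v => p v)) /=.
rewrite -sum_nat_const big_mkcond [X in _ <= X]big_mkcond /=.
apply: leq_sum => c _; rewrite inE; case: ifP => // Cc.
exact: p_cone (CH _ Cc).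
Qed.

Lemma walk_mass_one A : #|[set c | A c && H c v0]| * p v0 <= walk_mass A 1.
Proof.
rewrite /walk_mass /= cats0 big_map big_filter (eq_bigl _ _ (admissible_step_nil A)).
rewrite (eq_bigr (fun cv => p cv.2)) => [|[c v] _]; last by rewrite /extend_walk last_rcons.
by apply: cone_sum_checks => c /andP[].
Qed.

Lemma walk_mass_succ A k : (d - 1) * walk_mass A k.+1 <= walk_mass A k.+2.
Proof.
rewrite /walk_mass nb_walksS big_allpairs_dep nb_walksS !big_allpairs_dep big_distrr /=.
apply: leq_sum => w _; rewrite big_distrr /= !big_filter.
apply: leq_sum => [[c0 u]] step_u.
rewrite big_filter (eq_bigl _ _ (fun cv => admissible_step_ext cv step_u)).
rewrite (eq_bigr (fun cv => p cv.2)) => [|[c v] _]; last by rewrite /extend_walk last_rcons.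
rewrite /extend_walk last_rcons /=.
apply: leq_trans (cone_sum_checks (C := fun c => H c u && (c != c0)) _); last first.
  by move=> c /andP[].
rewrite leq_mul2r; apply/orP; right.
have -> : [set c | H c u && (c != c0)] = [set c | H c u] :\ c0.
  by apply/setP => c; rewrite !inE andbC.
have := cardsD1 c0 [set c | H c u]; rewrite inE (admissible_step_edge step_u).
by have := d_le_deg u; rewrite /var_deg; lia.
Qed.

Lemma walk_mass_all j : d * (d - 1) ^ j * p v0 <= walk_mass predT j.+1.
Proof.
elim: j => [|j IH].
  rewrite expn0 muln1; apply: leq_trans (walk_mass_one predT).
  by rewrite leq_mul2r (@eq_card _ _ [set c | H c v0]) ?d_le_deg ?orbT.
apply: leq_trans (walk_mass_succ _ j).
by rewrite expnS mulnCA -mulnA leq_mul2l IH orbT.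
Qed.

Lemma walk_mass_through c j : H c v0 -> (d - 1) ^ j * p v0 <= walk_mass (pred1 c) j.+1.
Proof.
move=> Hc; elim: j => [|j IH].
  rewrite expn0 mul1n; apply: leq_trans (walk_mass_one _).
  rewrite (_ : [set c' | pred1 c c' && H c' v0] = [set c]) ?cards1 ?mul1n //.
  by apply/setP => c'; rewrite !inE /=; case: eqP => // ->.
apply: leq_trans (walk_mass_succ _ j).
by rewrite expnS -mulnA leq_mul2l IH orbT.
Qed.

Lemma sum_vweight_last_le (L : seq (seq vertex)) : uniq (map (last (inl v0)) L) ->
  \sum_(w <- L) vweight (last (inl v0) w) <= \sum_(i < n) p i.
Proof.
move=> uniq_L; rewrite -(big_map (last (inl v0)) predT vweight) big_uniq //.
apply: (@leq_trans (\sum_(z : vertex) vweight z)).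
  by rewrite big_mkcond /=; apply: leq_sum => z _; case: ifP.
by rewrite big_sumType /= [X in _ + X]big1 ?addn0.
Qed.

Lemma walk_mass_upto t : p v0 * (1 + \sum_(k < t) d * (d - 1) ^ k) <=
  \sum_(w <- nb_walks_upto t.+1) vweight (last (inl v0) w).
Proof.
rewrite big_nb_walks_upto big_ord_recl /= big_seq1 mulnDr muln1 leq_add2l big_distrr.
by apply: leq_sum => j _; rewrite [X in X <= _]mulnC; exact: walk_mass_all.
Qed.

Lemma vertex_tree_bound t : girth_gt (4 * t) ->
  p v0 * (1 + \sum_(k < t) d * (d - 1) ^ k) <= \sum_(i < n) p i.
Proof.
move=> no_cycle; apply: leq_trans (walk_mass_upto t) (sum_vweight_last_le _).
rewrite map_inj_in_uniq ?nb_walks_upto_uniq // => w1 w2.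
move=> /mem_nb_walks_upto [j1 lt1 in1] /mem_nb_walks_upto [j2 lt2 in2].
by apply: (nb_walks_last_inj no_cycle in1 in2); lia.
Qed.

Lemma edge_tree_bound t c : H c v0 -> girth_gt (4 * t + 2) ->
  p v0 * (1 + \sum_(k < t) d * (d - 1) ^ k + (d - 1) ^ t) <= \sum_(i < n) p i.
Proof.
move=> Hc no_cycle; set L := nb_walks_upto t.+1 ++ nb_walks (pred1 c) t.+1.
have uniq_L : uniq L.
  rewrite cat_uniq nb_walks_upto_uniq nb_walks_uniq andbT andTb.
  apply/hasPn => w w_in; apply/negP => /mem_nb_walks_upto [j lt_j w_in'].
  have [_ _ size1] := mem_nb_walks w_in; have [_ _ size2] := mem_nb_walks w_in'.
  by move: lt_j; rewrite size1 in size2; lia.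
have inj_L : {in L &, injective (last (inl v0))}.
  move=> w1 w2; rewrite /L !(mem_cat _ (nb_walks_upto t.+1)) => /orP[] in1 /orP[] in2.
  - move: in1 in2 => /mem_nb_walks_upto [j1 lt1 in1] /mem_nb_walks_upto [j2 lt2 in2].
    by apply: (nb_walks_last_inj no_cycle in1 in2); lia.
  - move: in1 => /mem_nb_walks_upto [j1 lt1 in1].
    by apply: (nb_walks_last_inj no_cycle in1 in2); lia.
  - move: in2 => /mem_nb_walks_upto [j2 lt2 in2].
    by apply: (nb_walks_last_inj no_cycle in1 in2); lia.
  by apply: (nb_walks_through_last_inj no_cycle in1 in2); lia.
apply: (leq_trans _ (sum_vweight_last_le (L := L) _)); last by rewrite map_inj_in_uniq.
rewrite big_cat mulnDr leq_add ?walk_mass_upto //.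
by rewrite mulnC; apply: walk_mass_through.
Qed.

End Mass.
End Walks.

Lemma girth_bound_tree g d p v0 :
  regular_tanner H -> girth_is H g -> (forall i, d <= var_deg H i) -> fundamental_cone p ->
  girth_bound d g * p v0 <= \sum_(i < n) p i.
Proof.
move=> reg [cyc no_short] d_le cone.
have girth_gtP K : K < g -> girth_gt K.
  by move=> lt_Kg k le_kK; apply: no_short; apply: leq_ltn_trans lt_Kg.
have [_ [_ le3g _ _]] := cyc.
have E1 := odd_double_half g; have E2 := odd_double_half g./2.
rewrite /girth_bound mulnC; case: ifP => odd_half.
  apply: (vertex_tree_bound v0 cone d_le); apply: girth_gtP.
  by move: E1 E2; rewrite odd_half; case: (odd g) => /=; lia.
have [c0 Hc0] : exists c0, H c0 v0.
  have := regular_cycle_var_deg_gt0 reg cyc v0.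
  by rewrite card_gt0 => /set0Pn [c0]; rewrite inE; exists c0.
apply: (edge_tree_bound cone d_le Hc0); apply: girth_gtP.
by move: E1 E2; rewrite odd_half; case: (odd g) => /=; lia.
Qed.

End TannerGraph.

Section Weights.
Variables (n : nat) (p : 'I_n -> nat) (M : nat).
Hypothesis p_le_M : forall i, p i <= M.

Lemma sum_largest_le e : sum_largest p e <= e * M.
Proof.
apply/bigmax_leqP => S /eqP <-.
by rewrite -sum_nat_const; apply: leq_sum => i _.
Qed.

Lemma psum_le_sum_largest_bsc_e : psum p <= 2 * sum_largest p (bsc_e p).
Proof.
have has_e : has (fun e => psum p <= 2 * sum_largest p e) (iota 0 n.+1).
  apply/hasP; exists n; first by rewrite mem_iota add0n ltnSn.
  apply: leq_trans (leq_pmull _ (isT : 0 < 2)).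
  apply: (bigmax_sup setT); first by rewrite cardsT card_ord.
  by apply/eq_leq/eq_bigl => i; rewrite inE.
have := nth_find 0 has_e; rewrite nth_iota //.
by move: has_e; rewrite has_find size_iota.
Qed.

Lemma w_BSC_ge b : 0 < M -> b * M <= psum p -> b <= w_BSC p.
Proof.
move=> M_gt0 le_bM; have le_psum := psum_le_sum_largest_bsc_e.
have le_SL := sum_largest_le (bsc_e p).
rewrite /w_BSC; case: eqP => [_ | ne].
  by rewrite -(leq_pmul2r M_gt0) -mulnA; lia.
have : b * M < 2 * bsc_e p * M by rewrite -mulnA; move: ne; lia.
by rewrite ltn_pmul2r //; lia.
Qed.

Lemma w_AWGN_ge b i0 : p i0 != 0 -> b * M <= psum p -> (b%:R <= w_AWGN p)%R.
Proof.
move=> nz le_bM.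
have sq_gt0 : 0 < \sum_(i < n) p i ^ 2 by rewrite (bigD1 i0) //= addn_gt0 expn_gt0 lt0n nz.
have sq_le : \sum_(i < n) p i ^ 2 <= M * psum p.
  by rewrite big_distrr; apply: leq_sum => i _; rewrite expnS expn1 leq_mul2r p_le_M orbT.
rewrite /w_AWGN ler_pdivlMr ?ltr0n // -natrM ler_nat.
apply: leq_trans (leq_mul (leqnn b) sq_le) _.
by rewrite mulnA expnS expn1 leq_mul2r le_bM orbT.
Qed.

End Weights.

Theorem theorem1 (n m : nat) (H : 'I_m -> 'I_n -> bool) (g d : nat) :
  regular_tanner H -> girth_is H g -> smallest_left_degree H d ->
  forall p : 'I_n -> nat, pseudocodeword H p -> (exists i, p i != 0) ->
    girth_bound d g <= w_BSC p /\ ((girth_bound d g)%:R <= w_AWGN p)%R.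
Proof.
move=> reg girth [_ d_le] p pcw [i0 nz].
have [v0 _ max_v0] := arg_maxnP p (isT : predT i0).
have p_le i : p i <= p v0 by apply: max_v0.
have p_v0_gt0 : 0 < p v0 by apply: leq_trans (p_le i0); rewrite lt0n.
have tree := girth_bound_tree v0 reg girth d_le (pseudocodeword_fundamental_cone pcw).
by split; [exact: (w_BSC_ge p_le p_v0_gt0 tree) | exact: (w_AWGN_ge p_le nz tree)].
Qed.
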